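(* Let $s$ be a stream type and $p$ a prefix with $p : s$. If $p$ is both empty and maximal, then $s$ is nullable.
   Context: Stream types are generated by $s,t ::= 1 \mid \varepsilon \mid s\cdot t \mid s\,\|\,t \mid s+t \mid s^\star$. Prefixes are generated by $p ::= \mathtt{oneEmp} \mid \mathtt{oneFull} \mid \mathtt{epsEmp} \mid \mathtt{par}(p,p') \mid \mathtt{catA}(p) \mid \mathtt{catB}(p,p') \mid \mathtt{sumEmp} \mid \mathtt{inl}(p) \mid \mathtt{inr}(p) \mid \mathtt{starEmp} \mid \mathtt{starDone} \mid \mathtt{stA}(p) \mid \mathtt{stB}(p,p')$. Maximality (inductive): $\mathtt{epsEmp}$, $\mathtt{oneFull}$, $\mathtt{starDone}$ are maximal; $\mathtt{par}(p_1,p_2)$, $\mathtt{catB}(p_1,p_2)$, $\mathtt{stB}(p_1,p_2)$ are maximal if $p_1$ and $p_2$ are; $\mathtt{inl}(p)$, $\mathtt{inr}(p)$ are maximal if $p$ is; nothing else is maximal. Prefix typing $p : s$ (inductive): $\mathtt{epsEmp}:\varepsilon$; $\mathtt{oneEmp}:1$; $\mathtt{oneFull}:1$; $\mathtt{par}(p_1,p_2): s\|t$ if $p_1:s$, $p_2:t$; $\mathtt{catA}(p): s\cdot t$ if $p:s$; $\mathtt{catB}(p_1,p_2): s\cdot t$ if $p_1:s$, $p_1$ maximal, $p_2:t$; $\mathtt{sumEmp}: s+t$; $\mathtt{inl}(p):s+t$ if $p:s$; $\mathtt{inr}(p):s+t$ if $p:t$; $\mathtt{starEmp}:s^\star$;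 $\mathtt{starDone}:s^\star$; $\mathtt{stA}(p):s^\star$ if $p:s$; $\mathtt{stB}(p,p'):s^\star$ if $p:s$, $p$ maximal, $p':s^\star$. Emptiness (inductive): $\mathtt{epsEmp}$, $\mathtt{oneEmp}$, $\mathtt{sumEmp}$, $\mathtt{starEmp}$ are empty; $\mathtt{par}(p_1,p_2)$ is empty if $p_1,p_2$ are; $\mathtt{catA}(p)$ is empty if $p$ is; nothing else is empty. Nullability (inductive): $\varepsilon$ is nullable; $s\|t$ is nullable if $s$ and $t$ are; nothing else is nullable. *)

Inductive ty : Type :=
| TOne : ty
| TEps : ty
| TCat : ty -> ty -> ty
| TPar : ty -> ty -> ty
| TPlus : ty -> ty -> ty
| TStar : ty -> ty.

Inductive prefix : Type :=
| OneEmp : prefix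
| OneFull : prefix
| EpsEmp : prefix
| Par : prefix -> prefix -> prefix
| CatA : prefix -> prefix
| CatB : prefix -> prefix -> prefix
| SumEmp : prefix
| Inl : prefix -> prefix
| Inr : prefix -> prefix
| StarEmp : prefix
| StarDone : prefix
| StA : prefix -> prefix
| StB : prefix -> prefix -> prefix.

Inductive maximal : prefix -> Prop :=
| MaxEpsEmp : maximal EpsEmp
| MaxOneFull : maximal OneFull
| MaxStarDone : maximal StarDone
| MaxPar : forall p1 p2, maximal p1 -> maximal p2 -> maximal (Par p1 p2)
| MaxCatB : forall p1 p2, maximal p1 -> maximal p2 -> maximal (CatB p1 p2)
| MaxStB : forall p1 p2, maximal p1 -> maximal p2 -> maximal (StB p1 p2)
| MaxInl : forall p, maximal p -> maximal (Inl p)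
| MaxInr : forall p, maximal p -> maximal (Inr p).

Inductive has_type : prefix -> ty -> Prop :=
| TyEpsEmp : has_type EpsEmp TEps
| TyOneEmp : has_type OneEmp TOne
| TyOneFull : has_type OneFull TOne
| TyPar : forall p1 p2 s t, has_type p1 s -> has_type p2 t -> has_type (Par p1 p2) (TPar s t)
| TyCatA : forall p s t, has_type p s -> has_type (CatA p) (TCat s t)
| TyCatB : forall p1 p2 s t, has_type p1 s -> maximal p1 -> has_type p2 t ->
    has_type (CatB p1 p2) (TCat s t)
| TySumEmp : forall s t, has_type SumEmp (TPlus s t)
| TyInl : forall p s t, has_type p s -> has_type (Inl p) (TPlus s t)
| TyInr : forall p s t, has_type p t -> has_type (Inr p) (TPlus s t)
| TyStarEmp : forall s, has_type StarEmp (TStar s)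
| TyStarDone : forall s, has_type StarDone (TStar s)
| TyStA : forall p s, has_type p s -> has_type (StA p) (TStar s)
| TyStB : forall p p' s, has_type p s -> maximal p -> has_type p' (TStar s) ->
    has_type (StB p p') (TStar s).

Inductive empty : prefix -> Prop :=
| EmpEpsEmp : empty EpsEmp
| EmpOneEmp : empty OneEmp
| EmpSumEmp : empty SumEmp
| EmpStarEmp : empty StarEmp
| EmpPar : forall p1 p2, empty p1 -> empty p2 -> empty (Par p1 p2)
| EmpCatA : forall p, empty p -> empty (CatA p).

Inductive nullable : ty -> Prop :=
| NullEps : nullable TEps
| NullPar : forall s t, nullable s -> nullable t -> nullable (TPar s t).


(* Induction on emptiness: the only prefixes that are both empty and maximal
   are built from [EpsEmp] with [Par], and these can only be typed by
   [TEps] and [TPar]. *)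

Theorem mainTheorem1 (s : ty) (p : prefix) :
  has_type p s -> empty p -> maximal p -> nullable s.
Proof.
  intros Hty Hemp; revert s Hty.
  induction Hemp as [| | | | p1 p2 _ IH1 _ IH2 | p _ _];
    intros s Hty Hmax; inversion Hmax as [| | | ? ? Hmax1 Hmax2 | | | |]; subst.
  - inversion Hty; constructor.
  - inversion Hty as [| | | ? ? s1 s2 Hty1 Hty2 | | | | | | | | |]; subst.
    constructor; [exact (IH1 s1 Hty1 Hmax1) | exact (IH2 s2 Hty2 Hmax2)].
Qed.
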